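(* Let $L>1$ be a real number that is not an integer and let $T>0$. The following are equivalent: (i) there exists a continuous function $f:[0,T]\to\mathbb{R}$ with $f(0)=0$ and $f(T)=L$ such that there are no $s,t\in[0,T]$ with $t-s=T/L$ and $f(t)-f(s)=1$; (ii) there exists a continuous function $g:[0,L]\to\mathbb{R}$ with $g(0)=g(L)=0$ such that there is no $x\in[0,L-1]$ with $g(x)=g(x+1)$.
   Context: Statement (i) expresses that a race of length $L$ completed in time $T$ has a position function with no one-unit portion covered at exactly the average pace; statement (ii) expresses that some function on $[0,L]$ vanishing at both endpoints has no horizontal chord of length $1$. *)

From Stdlib Require Import Reals.
Open Scope R_scope.

Definition continuous_on_Icc (f : R -> R) (a b : R) : Prop :=
  forall x, a <= x <= b ->
    forall eps, 0 < eps -> exists delta, 0 < delta /\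
      forall y, a <= y <= b -> Rabs (y - x) < delta -> Rabs (f y - f x) < eps.

(* The shear g(x) = f(T x / L) - x, with inverse f(t) = g(L t / T) + L t / T,
   maps [0,T] onto [0,L] and turns a chord of f over a time span T/L with rise 1
   into a horizontal chord of g of length 1, and conversely. *)
From Stdlib Require Import Reals Lra.
Open Scope R_scope.

Lemma continuous_on_Icc_plus (f g : R -> R) (a b : R) :
  continuous_on_Icc f a b -> continuous_on_Icc g a b ->
  continuous_on_Icc (fun x => f x + g x) a b.
Proof.
  intros Hf Hg x Hx eps Heps.
  destruct (Hf x Hx (eps / 2) ltac:(lra)) as [df [Hdf Hf']].
  destruct (Hg x Hx (eps / 2) ltac:(lra)) as [dg [Hdg Hg']].
  exists (Rmin df dg); split; [now apply Rmin_pos|].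
  intros y Hy Hyx.
  assert (Hyf : Rabs (y - x) < df) by (eapply Rlt_le_trans; [exact Hyx | apply Rmin_l]).
  assert (Hyg : Rabs (y - x) < dg) by (eapply Rlt_le_trans; [exact Hyx | apply Rmin_r]).
  specialize (Hf' y Hy Hyf); specialize (Hg' y Hy Hyg).
  replace (f y + g y - (f x + g x)) with ((f y - f x) + (g y - g x)) by ring.
  eapply Rle_lt_trans; [apply Rabs_triang | lra].
Qed.

Lemma continuous_on_Icc_scal (c a b : R) :
  continuous_on_Icc (fun x => c * x) a b.
Proof.
  intros x _ eps Heps.
  assert (Hc : 0 < Rabs c + 1) by (pose proof (Rabs_pos c); lra).
  exists (eps / (Rabs c + 1)); split; [now apply Rdiv_lt_0_compat|].
  intros y _ Hyx.
  replace (c * y - c * x) with (c * (y - x)) by ring.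
  rewrite Rabs_mult.
  apply (Rmult_lt_compat_l (Rabs c + 1)) in Hyx; [|lra].
  replace ((Rabs c + 1) * (eps / (Rabs c + 1))) with eps in Hyx by (field; lra).
  pose proof (Rabs_pos c); pose proof (Rabs_pos (y - x)); nra.
Qed.

Lemma continuous_on_Icc_comp_scal (h : R -> R) (k a b : R) :
  0 < k -> continuous_on_Icc h (k * a) (k * b) ->
  continuous_on_Icc (fun x => h (k * x)) a b.
Proof.
  intros Hk Hh x Hx eps Heps.
  assert (Hkx : k * a <= k * x <= k * b) by (split; nra).
  destruct (Hh (k * x) Hkx eps Heps) as [d [Hd Hh']].
  exists (d / k); split; [now apply Rdiv_lt_0_compat|].
  intros y Hy Hyx.
  apply Hh'; [split; nra|].
  replace (k * y - k * x) with (k * (y - x)) by ring.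
  rewrite Rabs_mult, (Rabs_pos_eq k) by lra.
  apply (Rmult_lt_compat_l k) in Hyx; [|lra].
  replace (k * (d / k)) with d in Hyx by (field; lra).
  exact Hyx.
Qed.

Lemma continuous_on_Icc_shear (h : R -> R) (k m c : R) :
  0 < k -> continuous_on_Icc h 0 (k * c) ->
  continuous_on_Icc (fun x => h (k * x) + m * x) 0 c.
Proof.
  intros Hk Hh.
  apply continuous_on_Icc_plus; [|apply continuous_on_Icc_scal].
  apply continuous_on_Icc_comp_scal; [exact Hk|].
  now rewrite Rmult_0_r.
Qed.

Theorem lemma1 (L T : R) (hL : 1 < L) (hLnotint : forall n : Z, L <> IZR n)
  (hT : 0 < T) :
  (exists f : R -> R, continuous_on_Icc f 0 T /\ f 0 = 0 /\ f T = L /\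
     ~ (exists s t, 0 <= s <= T /\ 0 <= t <= T /\ t - s = T / L /\ f t - f s = 1))
  <->
  (exists g : R -> R, continuous_on_Icc g 0 L /\ g 0 = 0 /\ g L = 0 /\
     ~ (exists x, 0 <= x <= L - 1 /\ g x = g (x + 1))).
Proof.
  clear hLnotint.
  assert (HTL : 0 < T / L) by (apply Rdiv_lt_0_compat; lra).
  assert (HLT : 0 < L / T) by (apply Rdiv_lt_0_compat; lra).
  assert (ET : T / L * L = T) by (field; lra).
  assert (EL : L / T * T = L) by (field; lra).
  split.
  - intros [f [Hc [H0 [HT Hn]]]].
    exists (fun x => f (T / L * x) + (-1) * x).
    split; [apply continuous_on_Icc_shear; [exact HTL | now rewrite ET]|].
    rewrite Rmult_0_r, ET, H0, HT; split; [ring | split; [ring|]].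
    intros [x [Hx Heq]]; apply Hn.
    exists (T / L * x), (T / L * (x + 1)).
    repeat split; nra.
  - intros [g [Hc [H0 [HL Hn]]]].
    exists (fun t => g (L / T * t) + L / T * t).
    split; [apply continuous_on_Icc_shear; [exact HLT | now rewrite EL]|].
    rewrite Rmult_0_r, EL, H0, HL; split; [ring | split; [ring|]].
    intros [s [t [Hs [Ht [Hts Heq]]]]]; apply Hn.
    assert (Et : L / T * t = L / T * s + 1).
    { replace t with (s + T / L) by lra. field; lra. }
    rewrite Et in Heq.
    exists (L / T * s); repeat split; nra.
Qed.
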